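(* Let $S$ be a finite poset and let $L=(L_{x,y})_{x,y\in S}$ be the infinitesimal generator of a continuous-time Markov chain on $S$. Then $L$ is the generator of a realizably monotone Markov chain if and only if there exists a function $\Lambda:\mathcal{M}\to[0,\infty)$ such that \[ L_{x,y}=\sum_{f\in\mathcal{M}:\,f(x)=y}\Lambda(f)\qquad\text{for all }x,y\in S,\ x\neq y . \]
   Context: A generator on a finite set $S$ is a real matrix $L=(L_{x,y})_{x,y\in S}$ with $L_{x,y}\ge 0$ for $x\neq y$ and $L_{x,x}=-\sum_{y\neq x}L_{x,y}$; all Markov chains are time-homogeneous and, in continuous time, regular (finitely many jumps in bounded time intervals a.s.). $\mathcal{M}$ denotes the set of increasing maps $f:S\to S$ (i.e. $x\le y\Rightarrow f(x)\le f(y)$). A continuous-time Markov chain on $S$ with transition probabilities $P_t(x,y)$ is realizably monotone if there is a Markov chain $(\xi_t)_{t\ge0}$ with values in $S^S$ (maps $S\to S$) such that $\xi_0=\mathrm{Id}$; for each $z\in S$, $(\xi_t(z))_{t\ge 0}$ is a Markov chain with transition probabilities $P_t$; and $w\le z$ implies $\xi_t(w)\le\xi_t(z)$ for all $t\ge 0$. A generator is called realizably monotone if it generates a realizably monotone chain. *)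

From mathcomp Require Import all_boot.
From Stdlib Require Import Reals List.

Set Implicit Arguments.
Unset Strict Implicit.
Unset Printing Implicit Defensive.

Definition rsum (T : finType) (F : T -> R) : R := \big[Rplus/0%R]_(i : T) F i.

Definition is_generator (T : finType) (L : T -> T -> R) : Prop :=
  (forall x y : T, x <> y -> (0 <= L x y)%R) /\
  (forall x : T, L x x = - rsum (fun y => if y == x then 0%R else L x y))%R.

(* P is the transition function (t |-> exp(tL)) of the chain with generator L:
   the unique solution of the Kolmogorov backward equation with P_0 = Id. *)
Definition trans_fun (T : finType) (L : T -> T -> R) (P : R -> T -> T -> R) : Prop :=
  (forall x y : T, P 0%R x y = if x == y then 1%R else 0%R) /\
  (forall (t : R) (x y : T),
      derivable_pt_lim (fun s => P s x y) t (rsum (fun z => L x z * P t z y))%R).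

Definition increasing_map (S : finType) (le : rel S) (f : {ffun S -> S}) : bool :=
  [forall x, forall y, le x y ==> le (f x) (f y)].

(* finite-dimensional distribution of the coordinate process (xi_t(z))_t of a
   chain on maps S -> S with transition function Q, started at g0:
   ds = [(d1,y1);...;(dn,yn)] gives P(xi_{t1}(z)=y1,...,xi_{tn}(z)=yn) with
   time increments d_i = t_i - t_{i-1}. *)
Fixpoint fdd_maps (S : finType)
    (Q : R -> {ffun S -> S} -> {ffun S -> S} -> R) (z : S)
    (g0 : {ffun S -> S}) (ds : list (R * S)) : R :=
  match ds with
  | nil => 1%R
  | (d, y) :: ds' =>
      rsum (fun g : {ffun S -> S} =>
              if g z == y then (Q d g0 g * fdd_maps Q z g ds')%R else 0%R)
  end.

Fixpoint fdd_pts (S : finType) (P : R -> S -> S -> R) (y0 : S)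
    (ds : list (R * S)) : R :=
  match ds with
  | nil => 1%R
  | (d, y) :: ds' => (P d y0 y * fdd_pts P y ds')%R
  end.

(* L generates a realizably monotone chain: there is a (regular, homogeneous)
   Markov chain xi on S^S, with generator G and transition function Q, started
   at Id, which is a.s. increasing at every time t >= 0, and such that for
   every z the coordinate process xi_t(z) is a Markov chain with transition
   probabilities P_t = exp(tL) (equality of all finite-dimensional laws). *)
Definition realizably_monotone (S : finType) (le : rel S) (L : S -> S -> R) : Prop :=
  exists (P : R -> S -> S -> R)
         (G : {ffun S -> S} -> {ffun S -> S} -> R)
         (Q : R -> {ffun S -> S} -> {ffun S -> S} -> R),
    trans_fun L P /\ is_generator G /\ trans_fun G Q /\
    (forall (t : R) (g : {ffun S -> S}),
        (0 <= t)%R -> Q t [ffun x => x] g <> 0%R -> increasing_map le g) /\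
    (forall (z : S) (ds : list (R * S)),
        Forall (fun p => (0 <= fst p)%R) ds ->
        fdd_maps Q z [ffun x => x] ds = fdd_pts P z ds).

(* Necessity: the one-dimensional marginal of the chain on maps started at Id gives
   P_t(z, y) = sum_{g z = y} Q_t(Id, g); differentiating at t = 0 yields
   L(z, y) = sum_{g z = y} G(Id, g), so Lam(f) := G(Id, f) (f <> Id) is a valid choice of
   rates, and G(Id, f) > 0 forces f to be increasing, since otherwise Q_t(Id, f) > 0 for
   small t > 0.
   Sufficiency: let the chain on maps jump from g to f o g at rate Lam(f), for f increasing.
   Its generator preserves the set of increasing maps and is lumpable onto L along every
   evaluation g |-> g(z); both properties pass from a generator to its exponential series
   exp(tG), which therefore gives a monotone realization of L. *)

From mathcomp Require Import all_boot.
From Stdlib Require Import Reals List Lra.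
From Coquelicot Require Import Coquelicot.
From HB Require Import structures.

Set Implicit Arguments.
Unset Strict Implicit.
Unset Printing Implicit Defensive.

Local Open Scope R_scope.

HB.instance Definition _ := Monoid.isComLaw.Build R 0 Rplus
  (fun a b c => esym (Rplus_assoc a b c)) Rplus_comm Rplus_0_l.
HB.instance Definition _ := Monoid.isMulLaw.Build R 0 Rmult Rmult_0_l Rmult_0_r.
HB.instance Definition _ := Monoid.isAddLaw.Build R Rmult Rplus
  Rmult_plus_distr_r Rmult_plus_distr_l.

Section RealSums.
Variable T : finType.
Implicit Types (F G : T -> R) (a : T) (c : R).

Lemma eq_rsum F G : (forall i, F i = G i) -> rsum F = rsum G.
Proof. by move=> FG; apply: eq_bigr => i _. Qed.

Lemma rsum_single F a : (forall i, i != a -> F i = 0) -> rsum F = F a.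
Proof. by move=> Fa; rewrite /rsum (bigD1 a) //= big1 ?Rplus_0_r // => i /Fa. Qed.

Lemma rsumD1 F a : rsum F = F a + rsum (fun i => if i == a then 0 else F i).
Proof.
rewrite /rsum (bigD1 a) //= [in RHS](bigD1 a) //= eqxx Rplus_0_l.
by congr Rplus; apply: eq_bigr => i /negbTE ->.
Qed.

Lemma rsum_distrl F c : rsum F * c = rsum (fun i => F i * c).
Proof. exact: (big_distrl (times := Rmult)). Qed.

Lemma rsum_distrr F c : c * rsum F = rsum (fun i => c * F i).
Proof. exact: (big_distrr (times := Rmult)). Qed.

Lemma rsum_if (b : bool) F :
  (if b then rsum F else 0) = rsum (fun i => if b then F i else 0).
Proof. by case: b; rewrite // /rsum big1. Qed.

Lemma rsum_neq0 F : rsum F <> 0 -> exists i, F i <> 0.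
Proof.
move=> F_neq0; apply: Classical_Prop.NNPP => noF; apply: F_neq0.
rewrite /rsum big1 // => i _; apply: Classical_Prop.NNPP => Fi.
by apply: noF; exists i.
Qed.

Lemma rsum_ge0 F : (forall i, 0 <= F i) -> 0 <= rsum F.
Proof.
move=> F_ge0; rewrite /rsum; elim/big_rec: _ => [|i x _ x_ge0]; first lra.
by have := F_ge0 i; lra.
Qed.

Lemma ler_rsum F G : (forall i, F i <= G i) -> rsum F <= rsum G.
Proof.
move=> FG; rewrite /rsum; elim/big_rec2: _ => [|i x y _ xy]; first lra.
by have := FG i; lra.
Qed.

Lemma rsum_ge_term F a : (forall i, 0 <= F i) -> F a <= rsum F.
Proof.
move=> F_ge0; rewrite (rsumD1 F a).
have : 0 <= rsum (fun i => if i == a then 0 else F i).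
  by apply: rsum_ge0 => i; case: ifP => _; [lra|].
lra.
Qed.

Lemma Rabs_rsum F : Rabs (rsum F) <= rsum (fun i => Rabs (F i)).
Proof.
rewrite /rsum; elim/big_rec2: _ => [|i x y _ xy]; first by rewrite Rabs_R0; lra.
by apply: Rle_trans (Rabs_triang _ _) _; lra.
Qed.

End RealSums.

Lemma exchange_rsum (T U : finType) (F : T -> U -> R) :
  rsum (fun i => rsum (F i)) = rsum (fun j => rsum (fun i => F i j)).
Proof. exact: exchange_big. Qed.

Lemma generator_rowsum (T : finType) (A : T -> T -> R) :
  is_generator A -> forall x, rsum (A x) = 0.
Proof. by move=> [_ Adiag] x; rewrite (rsumD1 (A x) x) {1}Adiag; lra. Qed.

Fixpoint mpow (T : finType) (A : T -> T -> R) (n : nat) (x y : T) : R :=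
  match n with
  | O => if x == y then 1 else 0
  | m.+1 => rsum (fun w => A x w * mpow A m w y)
  end.

Definition exp_coef (T : finType) (A : T -> T -> R) (x y : T) (n : nat) : R :=
  mpow A n x y / INR (Factorial.fact n).

Definition mexp (T : finType) (A : T -> T -> R) (t : R) (x y : T) : R :=
  PSeries (exp_coef A x y) t.

Lemma pow_div_fact_le_exp u n : 0 <= u -> u ^ n / INR (Factorial.fact n) <= exp u.
Proof.
move=> u_ge0; apply: Rle_trans (exp_ge_taylor u n u_ge0).
have terms_ge0 k : 0 <= u ^ k / INR (Factorial.fact k).
  apply: Rmult_le_pos; first exact: pow_le.
  by apply/Rlt_le/Rinv_0_lt_compat/INR_fact_lt_0.
case: n => [|n]; first by rewrite /=; lra.
by rewrite tech5; have := cond_pos_sum _ n terms_ge0; lra.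
Qed.

Section MatrixExponential.
Variables (T : finType) (A : T -> T -> R).

Definition abs_mass : R := rsum (fun x => rsum (fun y => Rabs (A x y))).

Lemma abs_mass_ge0 : 0 <= abs_mass.
Proof. by apply: rsum_ge0 => x; apply: rsum_ge0 => y; apply: Rabs_pos. Qed.

Lemma Rabs_mpow_le n x y : Rabs (mpow A n x y) <= abs_mass ^ n.
Proof.
elim: n x y => [|n IH] x y /=.
  by case: ifP => _; rewrite ?Rabs_R1 ?Rabs_R0; lra.
apply: Rle_trans (Rabs_rsum _) _.
apply: (Rle_trans _ (rsum (fun w => Rabs (A x w) * abs_mass ^ n))).
  apply: ler_rsum => w; rewrite Rabs_mult.
  by apply: Rmult_le_compat_l; [apply: Rabs_pos | apply: IH].
rewrite -rsum_distrl; apply: Rmult_le_compat_r; first exact: pow_le abs_mass_ge0.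
rewrite /abs_mass; apply: (@rsum_ge_term _ (fun x => rsum (fun y => Rabs (A x y))) x) => x'.
by apply: rsum_ge0 => y'; apply: Rabs_pos.
Qed.

(* The coefficients are bounded by [abs_mass ^ n / n!], so the radius is infinite. *)
Lemma exp_coef_radius x y r : Rbar_lt (Rabs r) (CV_radius (exp_coef A x y)).
Proof.
apply: (Rbar_lt_le_trans _ (Rbar.Finite (Rabs r + 1))); first by rewrite /=; lra.
apply: (proj1 (CV_radius_bounded _)).
exists (exp (abs_mass * (Rabs r + 1))) => n.
have r1_ge0 : 0 <= Rabs r + 1 by have := Rabs_pos r; lra.
have ifact_ge0 : 0 <= / INR (Factorial.fact n) by apply/Rlt_le/Rinv_0_lt_compat/INR_fact_lt_0.
apply: Rle_trans (pow_div_fact_le_exp n _);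
  last by apply: Rmult_le_pos; [exact: abs_mass_ge0 | lra].
rewrite /exp_coef /Rdiv !Rabs_mult -RPow_abs (Rabs_right (/ _)) ?(Rabs_right (Rabs r + 1));
  try by apply: Rle_ge.
rewrite Rpow_mult_distr Rmult_assoc (Rmult_comm (/ _)) -Rmult_assoc.
apply: Rmult_le_compat_r => //; apply: Rmult_le_compat_r; first exact: pow_le.
exact: Rabs_mpow_le.
Qed.

Lemma ex_pseries_exp_coef x y t : ex_pseries (exp_coef A x y) t.
Proof. exact/CV_radius_inside/exp_coef_radius. Qed.

End MatrixExponential.

Lemma PSeries_rsum (T : finType) (c : T -> R) (b : T -> nat -> R) t :
  (forall i, ex_pseries (b i) t) ->
  PSeries (fun n => rsum (fun i => c i * b i n)) t = rsum (fun i => c i * PSeries (b i) t).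
Proof.
move=> b_ex; apply: is_pseries_unique; rewrite /rsum.
elim: (index_enum T) => [|i r IH].
  rewrite big_nil; apply: (is_pseries_ext (fun _ => 0)); first by move=> n; rewrite big_nil.
  rewrite -{2}(PSeries_const_0 t); apply/PSeries_correct/CV_radius_inside.
  by rewrite CV_radius_const_0.
rewrite big_cons.
apply: (is_pseries_ext (PS_plus (PS_scal (c i) (b i))
                          (fun n => \big[Rplus/0]_(j <- r) (c j * b j n)))).
  by move=> n; rewrite big_cons.
apply: (is_pseries_plus _ _ _ (scal (c i) (PSeries (b i) t))) => //.
apply: is_pseries_scal; first by rewrite /mult /=; ring.
exact: PSeries_correct.
Qed.

Lemma mexp_trans (T : finType) (A : T -> T -> R) : trans_fun A (mexp A).
Proof.
split=> [x y | t x y].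
  by rewrite /mexp PSeries_0 /exp_coef /=; case: ifP => _; lra.
apply/is_derive_Reals.
suff <- : PSeries (PS_derive (exp_coef A x y)) t = rsum (fun z => A x z * mexp A t z y).
  exact: is_derive_PSeries (exp_coef_radius A x y t).
rewrite /mexp -PSeries_rsum; last by move=> w; apply: ex_pseries_exp_coef.
apply: PSeries_ext => n; rewrite /PS_derive /exp_coef fact_simpl mult_INR [mpow A n.+1 x y]/=.
rewrite /Rdiv rsum_distrl rsum_distrr; apply: eq_rsum => w.
have := INR_fact_lt_0 n; have : 0 < INR n.+1 by apply/lt_0_INR/ltP.
by move=> n1_gt0 fact_gt0; field; lra.
Qed.

Definition lumpable (T U : finType) (phi : T -> U) (A : T -> T -> R) (B : U -> U -> R) :=
  forall g y, rsum (fun w => if phi w == y then A g w else 0) = B (phi g) y.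

Definition preserves (T : finType) (A : T -> T -> R) (Pr : pred T) :=
  forall g h, Pr g -> A g h <> 0 -> Pr h.

Section Lumping.
Variables (T U : finType) (phi : T -> U) (A : T -> T -> R) (B : U -> U -> R).

Lemma lumpable_generator :
  is_generator A -> is_generator B ->
  (forall g y, y != phi g -> rsum (fun w => if phi w == y then A g w else 0) = B (phi g) y) ->
  lumpable phi A B.
Proof.
move=> genA [_ Bdiag] lump_off g y; case: (y =P phi g) => [->|/eqP]; last exact: lump_off.
set lump := fun y => rsum (fun w => if phi w == y then A g w else 0).
have lump_total : rsum lump = 0.
  rewrite /lump exchange_rsum -[RHS](generator_rowsum genA g); apply: eq_rsum => w.
  by rewrite (@rsum_single _ _ (phi w)) ?eqxx // => y' /negbTE; rewrite eq_sym => ->.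
move: lump_total; rewrite (rsumD1 lump (phi g)) (Bdiag (phi g)).
rewrite (eq_rsum (G := fun y => if y == phi g then 0 else B (phi g) y)) /lump /=; first lra.
by move=> y'; case: ifP => // /negbT /lump_off.
Qed.

Hypothesis lumpAB : lumpable phi A B.

Lemma lumpable_mpow n : lumpable phi (mpow A n) (mpow B n).
Proof.
elim: n => [|n IH] g y /=.
  rewrite (@rsum_single _ _ g) ?eqxx // => h /negbTE h_neq.
  by rewrite [g == h]eq_sym h_neq; case: ifP.
transitivity (rsum (fun w => A g w * mpow B n (phi w) y)).
  rewrite (eq_rsum (G := fun h => rsum (fun w =>
      if phi h == y then A g w * mpow A n w h else 0)));
    last by move=> h; rewrite rsum_if.
  rewrite exchange_rsum; apply: eq_rsum => w; rewrite -IH rsum_distrr.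
  by apply: eq_rsum => h; case: ifP => _; lra.
transitivity (rsum (fun x => rsum (fun w =>
  if phi w == x then A g w * mpow B n (phi w) y else 0))).
  rewrite exchange_rsum; apply: eq_rsum => w.
  by rewrite (@rsum_single _ _ (phi w)) ?eqxx // => x /negbTE; rewrite eq_sym => ->.
apply: eq_rsum => x; rewrite -lumpAB rsum_distrl; apply: eq_rsum => w.
by case: eqP => [->|]; lra.
Qed.

Lemma lumpable_mexp t : lumpable phi (mexp A t) (mexp B t).
Proof.
move=> g y; rewrite /mexp -(PSeries_ext (fun n => rsum (fun h =>
  (if phi h == y then 1 else 0) * exp_coef A g h n))); last first.
  move=> n; rewrite /exp_coef -lumpable_mpow /Rdiv rsum_distrl; apply: eq_rsum => h.
  by case: ifP => _; lra.
rewrite PSeries_rsum; last by move=> h; apply: ex_pseries_exp_coef.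
by apply: eq_rsum => h; case: ifP => _; lra.
Qed.

End Lumping.

Section Preservation.
Variables (T : finType) (A : T -> T -> R) (Pr : pred T).
Hypothesis A_Pr : preserves A Pr.

Lemma preserves_mpow n : preserves (mpow A n) Pr.
Proof.
elim: n => [|n IH] g h Pg /=; first by case: eqP => [<-|_ []].
move=> /rsum_neq0 [w Aw_mpow]; apply: (IH w) => [|mpow0].
  by apply: (A_Pr Pg) => Agw0; apply: Aw_mpow; rewrite Agw0; ring.
by apply: Aw_mpow; rewrite mpow0; ring.
Qed.

Lemma preserves_mexp t : preserves (mexp A t) Pr.
Proof.
move=> g h Pg; apply: contra_notT => notPh.
rewrite /mexp -(PSeries_const_0 t); apply: PSeries_ext => n; rewrite /exp_coef.
case: (Req_dec (mpow A n g h) 0) => [->|mpow_neq0]; first lra.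
by have := preserves_mpow Pg mpow_neq0; rewrite (negbTE notPh).
Qed.

End Preservation.

Lemma fdd_maps_lumpable (S : finType) (Q : R -> {ffun S -> S} -> {ffun S -> S} -> R)
    (P : R -> S -> S -> R) (z : S) :
  (forall t, lumpable (fun g : {ffun S -> S} => g z) (Q t) (P t)) ->
  forall ds g0, fdd_maps Q z g0 ds = fdd_pts P (g0 z) ds.
Proof.
move=> lumpQP; elim=> [|[d y] ds IH] g0 //=.
rewrite -lumpQP rsum_distrl; apply: eq_rsum => g.
by case: eqP => [<-|_]; rewrite ?IH; lra.
Qed.

Definition fcomp (S : finType) (f g : {ffun S -> S}) : {ffun S -> S} := [ffun x => f (g x)].

Lemma increasing_fcomp (S : finType) (le : rel S) (f g : {ffun S -> S}) :
  increasing_map le f -> increasing_map le g -> increasing_map le (fcomp f g).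
Proof.
move=> /forallP f_incr /forallP g_incr; apply/forallP => x; apply/forallP => y.
apply/implyP => le_xy; rewrite !ffunE.
have le_gxy : le (g x) (g y) := implyP (forallP (g_incr x) y) le_xy.
exact: implyP (forallP (f_incr (g x)) (g y)) le_gxy.
Qed.

Lemma increasing_id (S : finType) (le : rel S) : increasing_map le [ffun x => x].
Proof. by apply/forallP => x; apply/forallP => y; apply/implyP; rewrite !ffunE. Qed.

Section MonotoneCoupling.
Variables (S : finType) (le : rel S) (Lam : {ffun S -> S} -> R).
Hypothesis Lam_ge0 : forall f, increasing_map le f -> 0 <= Lam f.

Definition jump_rate (g h : {ffun S -> S}) : R :=
  rsum (fun f => if increasing_map le f && (fcomp f g == h) then Lam f else 0).

Definition coupling_gen (g h : {ffun S -> S}) : R :=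
  if h == g then - rsum (fun h' => if h' == g then 0 else jump_rate g h') else jump_rate g h.

Lemma coupling_gen_generator : is_generator coupling_gen.
Proof.
split=> [g h /eqP /negbTE h_neq | g]; rewrite /coupling_gen.
  rewrite eq_sym h_neq; apply: rsum_ge0 => f.
  by case: ifP => [/andP [/Lam_ge0 //] | _]; lra.
by rewrite eqxx; congr Ropp; apply: eq_rsum => h; case: ifP.
Qed.

Lemma coupling_gen_preserves_increasing : preserves coupling_gen (increasing_map le).
Proof.
move=> g h g_incr; rewrite /coupling_gen; case: eqP => [-> // | _].
move=> /rsum_neq0 [f]; case: ifP => [/andP [f_incr /eqP <-] _ | _ []//].
exact: increasing_fcomp.
Qed.

Variable L : S -> S -> R.
Hypothesis HL : is_generator L.
Hypothesis L_rates : forall x y : S, x <> y ->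
  L x y = rsum (fun f : {ffun S -> S} => if increasing_map le f && (f x == y) then Lam f else 0).

Lemma coupling_gen_lumpable (z : S) : lumpable (fun g : {ffun S -> S} => g z) coupling_gen L.
Proof.
apply: lumpable_generator coupling_gen_generator HL _ => g y y_neq.
rewrite (eq_rsum (G := fun h : {ffun S -> S} => if h z == y then jump_rate g h else 0));
  last first.
  move=> h; rewrite /coupling_gen; case: (h =P g) => [-> | _] //.
  by rewrite eq_sym (negbTE y_neq).
rewrite L_rates; last by move=> gz_y; rewrite gz_y eqxx in y_neq.
rewrite (eq_rsum (G := fun h : {ffun S -> S} => rsum (fun f => if h z == y then
    (if increasing_map le f && (fcomp f g == h) then Lam f else 0) else 0)));
  last by move=> h; rewrite rsum_if.
rewrite exchange_rsum; apply: eq_rsum => f.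
rewrite (@rsum_single _ _ (fcomp f g)); last first.
  by move=> h /negbTE h_neq; rewrite [fcomp f g == h]eq_sym h_neq andbF; case: ifP.
by rewrite eqxx andbT ffunE; case: (f (g z) == y); rewrite ?andbT ?andbF.
Qed.

End MonotoneCoupling.

Lemma realizably_monotone_of_rates (S : finType) (le : rel S) (L : S -> S -> R) :
  is_generator L ->
  (exists Lam : {ffun S -> S} -> R,
    (forall f, increasing_map le f -> 0 <= Lam f) /\
    (forall x y : S, x <> y ->
       L x y = rsum (fun f : {ffun S -> S} =>
                       if increasing_map le f && (f x == y) then Lam f else 0))) ->
  realizably_monotone le L.
Proof.
move=> HL [Lam [Lam_ge0 L_rates]].
pose G := coupling_gen le Lam.
exists (mexp L), G, (mexp G); split; first exact: mexp_trans.
split; first exact: coupling_gen_generator.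
split; first exact: mexp_trans.
split=> [t g _ | z ds _].
  exact: (@preserves_mexp _ _ _ (@coupling_gen_preserves_increasing _ le Lam)
            t _ g (increasing_id _)).
rewrite (fdd_maps_lumpable (P := mexp L)) ?ffunE // => t.
exact/lumpable_mexp/coupling_gen_lumpable.
Qed.

Lemma derive_rsum (T : finType) (F : T -> R -> R) (dF : T -> R) t :
  (forall i, derivable_pt_lim (F i) t (dF i)) ->
  derivable_pt_lim (fun s => rsum (fun i => F i s)) t (rsum dF).
Proof.
move=> F_deriv; rewrite /rsum; elim: (index_enum T) => [|a r IH].
  rewrite big_nil; apply: (derivable_pt_lim_ext (fct_cte 0)).
    by move=> s; rewrite big_nil.
  exact: derivable_pt_lim_const.
rewrite big_cons; apply: (derivable_pt_lim_ext (F a + fun s => \big[Rplus/0]_(i <- r) F i s)%F).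
  by move=> s; rewrite big_cons.
exact: derivable_pt_lim_plus.
Qed.

Lemma trans_fun_derive0 (T : finType) (A : T -> T -> R) (P : R -> T -> T -> R) :
  trans_fun A P -> forall x y, derivable_pt_lim (fun s => P s x y) 0 (A x y).
Proof.
move=> [P0 P_deriv] x y; have := P_deriv 0 x y.
rewrite (@rsum_single _ _ y) ?P0 ?eqxx ?Rmult_1_r // => w /negbTE w_neq_y.
by rewrite P0 w_neq_y Rmult_0_r.
Qed.

Lemma derivable_pt_lim0_unique_right (f g : R -> R) a b :
  (forall t, 0 <= t -> f t = g t) ->
  derivable_pt_lim f 0 a -> derivable_pt_lim g 0 b -> a = b.
Proof.
move=> fg f_deriv g_deriv; apply: Classical_Prop.NNPP => a_neq_b.
have eps_gt0 : 0 < Rabs (a - b) / 2 by have := Rabs_pos_lt (a - b); lra.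
case: (f_deriv _ eps_gt0) => df f_near; case: (g_deriv _ eps_gt0) => dg g_near.
pose h := Rmin df dg / 2.
have min_gt0 := Rmin_pos _ _ (cond_pos df) (cond_pos dg).
have hf := Rmin_l df dg; have hg := Rmin_r df dg.
have h_neq0 : h <> 0 by rewrite /h; lra.
have h_lt_df : Rabs h < df by rewrite Rabs_right /h; lra.
have h_lt_dg : Rabs h < dg by rewrite Rabs_right /h; lra.
have := f_near h h_neq0 h_lt_df; have := g_near h h_neq0 h_lt_dg.
rewrite !fg /h; try lra.
by move: eps_gt0; split_Rabs; lra.
Qed.

Lemma derivable_pt_lim0_pos_right (f : R -> R) a :
  derivable_pt_lim f 0 a -> 0 < a -> f 0 = 0 -> exists h, 0 < h /\ 0 < f h.
Proof.
move=> f_deriv a_gt0 f0; have half_gt0 : 0 < a / 2 by lra.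
case: (f_deriv _ half_gt0) => d f_near; have d_gt0 := cond_pos d.
have h_neq0 : d / 2 <> 0 by lra.
have := f_near (d / 2) h_neq0; rewrite f0 Rplus_0_l Rminus_0_r Rabs_right; last lra.
move=> slope; exists (d / 2); split; first lra.
have slope_gt0 : 0 < f (d / 2) / (d / 2) by move: slope; split_Rabs; lra.
have -> : f (d / 2) = f (d / 2) / (d / 2) * (d / 2) by field; lra.
by apply: Rmult_lt_0_compat; lra.
Qed.

Section Necessity.
Variables (S : finType) (le : rel S) (L : S -> S -> R) (P : R -> S -> S -> R).
Variables (G : {ffun S -> S} -> {ffun S -> S} -> R)
          (Q : R -> {ffun S -> S} -> {ffun S -> S} -> R).
Hypotheses (HP : trans_fun L P) (HG : is_generator G) (HQ : trans_fun G Q).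
Hypothesis Q_increasing : forall (t : R) (g : {ffun S -> S}),
  0 <= t -> Q t [ffun x => x] g <> 0 -> increasing_map le g.
Hypothesis Q_fdd : forall (z : S) (ds : list (R * S)),
  List.Forall (fun p : R * S => 0 <= p.1) ds -> fdd_maps Q z [ffun x => x] ds = fdd_pts P z ds.

Let Id : {ffun S -> S} := [ffun x => x].

Lemma generator_lumps_at_Id z y :
  L z y = rsum (fun g : {ffun S -> S} => if g z == y then G Id g else 0).
Proof.
apply: (derivable_pt_lim0_unique_right
  (f := fun s => P s z y)
  (g := fun s => rsum (fun g : {ffun S -> S} => if g z == y then Q s Id g else 0))).
- move=> t t_ge0; have := Q_fdd z (List.Forall_cons (t, y) t_ge0 (List.Forall_nil _)).
  rewrite /= Rmult_1_r => <-; apply: eq_rsum => g.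
  by case: ifP => _; rewrite ?Rmult_1_r.
- exact: trans_fun_derive0 HP z y.
- apply: derive_rsum => g; case: ifP => _; last exact: derivable_pt_lim_const.
  exact: trans_fun_derive0 HQ Id g.
Qed.

(* A positive rate from [Id] to [f] would give [Q_t(Id, f) > 0] for small [t > 0]. *)
Lemma jump_from_Id_increasing f : f != Id -> G Id f <> 0 -> increasing_map le f.
Proof.
move=> f_neq_Id Gf_neq0.
have Gf_ge0 : 0 <= G Id f by apply: (proj1 HG) => Id_f; rewrite Id_f eqxx in f_neq_Id.
have Gf_gt0 : 0 < G Id f by lra.
have Q0f : Q 0 Id f = 0 by rewrite (proj1 HQ) eq_sym (negbTE f_neq_Id).
have [h [h_gt0 Qhf_gt0]] := derivable_pt_lim0_pos_right (trans_fun_derive0 HQ Id f) Gf_gt0 Q0f.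
exact: Q_increasing (Rlt_le _ _ h_gt0) (Rgt_not_eq _ _ Qhf_gt0).
Qed.

End Necessity.

Lemma rates_of_realizably_monotone (S : finType) (le : rel S) (L : S -> S -> R) :
  realizably_monotone le L ->
  exists Lam : {ffun S -> S} -> R,
    (forall f, increasing_map le f -> 0 <= Lam f) /\
    (forall x y : S, x <> y ->
       L x y = rsum (fun f : {ffun S -> S} =>
                       if increasing_map le f && (f x == y) then Lam f else 0)).
Proof.
move=> [P [G [Q [HP [HG [HQ [Q_increasing Q_fdd]]]]]]].
pose Id : {ffun S -> S} := [ffun x => x].
exists (fun f => if f == Id then 0 else G Id f); split=> [f _ | x y x_neq_y].
  by case: eqP => [_ | f_neq_Id]; [lra | apply: (proj1 HG) => /esym /f_neq_Id].
rewrite (generator_lumps_at_Id HP HQ Q_fdd); apply: eq_rsum => f.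
case: (f x =P y) => [fx_y | _]; last by rewrite andbF.
have f_neq_Id : f != Id by apply/eqP => f_Id; apply: x_neq_y; rewrite -fx_y f_Id ffunE.
rewrite (negbTE f_neq_Id) andbT.
case f_incr: (increasing_map le f) => //.
case: (Req_dec (G Id f) 0) => // Gf_neq0.
by rewrite (jump_from_Id_increasing HG HQ Q_increasing f_neq_Id Gf_neq0) in f_incr.
Qed.

Theorem proposition2p1 (S : finType) (le : rel S)
    (le_refl : reflexive le) (le_anti : antisymmetric le)
    (le_trans : transitive le)
    (L : S -> S -> R) (HL : is_generator L) :
  realizably_monotone le L <->
  exists Lam : {ffun S -> S} -> R,
    (forall f, increasing_map le f -> (0 <= Lam f)%R) /\
    (forall x y : S, x <> y ->
       L x y = rsum (fun f : {ffun S -> S} =>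
                       if increasing_map le f && (f x == y) then Lam f else 0%R)).
Proof.
split; [exact: rates_of_realizably_monotone | exact: realizably_monotone_of_rates].
Qed.
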